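(* Let $\vec\nu=(\nu_2,\dots,\nu_{N-1})$ and $\vec\xi=(\xi_2,\dots,\xi_{N-1})$ be irreducible sequences of ordinals $<\varepsilon_{\mathbb{K}+2}$. If $\vec\nu<_{lx}\vec\xi$, then $o(\vec\nu)<o(\vec\xi)$.
   Context: Fix an integer $N\ge3$ and let $\mathbb{K}$ be an infinite cardinal (in the paper, the least $\Pi^1_{N-2}$-indescribable cardinal). $\Lambda=\varepsilon_{\mathbb{K}+1}$, and $\varepsilon_{\mathbb{K}+2}$ is the next epsilon number. Every $0<\xi<\varepsilon_{\mathbb{K}+2}$ has a unique Cantor normal form $\xi=\Lambda^{\xi_m}a_m+\cdots+\Lambda^{\xi_0}a_0$ with $\xi_m>\cdots>\xi_0$ and $0<a_i<\Lambda$. For $\xi>1$: $he(\xi)=\xi_m$, $Tl(\xi)=\Lambda^{\xi_0}a_0$; $he(i)=Tl(i)=i$ for $i\in\{0,1\}$. $he^{(0)}(\xi)=\xi$, $he^{(j+1)}(\xi)=he(he^{(j)}(\xi))$. $\Lambda_0(\xi)=\xi$, $\Lambda_{j+1}(\xi)=\Lambda^{\Lambda_j(\xi)}$. $\vec\xi=(\xi_2,\dots,\xi_{N-1})$ is irreducible iff for all $2\le i<N-1$ and $j>0$ with $i+j\le N-1$: $\xi_i>0$ implies $Tl(\xi_i)\ge\Lambda_j(\xi_{i+j}+1)$. For irreducible $\vec\xi$, $o(\vec\xi)=\sum\{\Lambda_{i-1}(\xi_i+1):2\le i\le N-1,\ \xi_i\ne0\}$, the summands taken in order of increasing $i$ (left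 to right); $o(\vec 0)=0$. $<_{lx}$: for $\vec\nu\ne\vec\xi$ (both indexed $2,\dots,N-1$), let $i$ be least with $\nu_i\ne\xi_i$, suppose $(\xi_i,\dots,\xi_{N-1})$ is not all zero, and let $k_1\ge i$ be least with $\xi_{k_1}\ne0$. Then $\vec\nu<_{lx}\vec\xi$ iff either $(\nu_i,\dots,\nu_{N-1})$ is all zero, or, letting $k_0\ge i$ be least with $\nu_{k_0}\ne0$, one of: (a) $i=k_0<k_1$ and $he^{(k_1-i)}(\nu_i)\le\xi_{k_1}$; (b) $k_0\ge k_1=i$ and $\nu_{k_0}<he^{(k_0-i)}(\xi_i)$. (If $(\xi_i,\dots,\xi_{N-1})$ is all zero, $\vec\nu<_{lx}\vec\xi$ fails.) *)

(* A model of (set-sized) ordinals as Brouwer/Aczel trees with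
   arbitrary Type-indexed branching; ordinal equality is [oeq] (extensional). *)
From Stdlib Require Import Arith Lia ClassicalEpsilon.

(* [sup A f] denotes the least ordinal strictly greater than every [f a]. *)
Inductive Ord : Type := sup (A : Type) (f : A -> Ord).

Fixpoint ole (x y : Ord) {struct x} : Prop :=
  match x, y with
  | sup A f, sup B g => forall a : A, exists b : B, ole (f a) (g b)
  end.

Definition olt (x y : Ord) : Prop :=
  match y with sup B g => exists b : B, ole x (g b) end.

Definition oeq (x y : Ord) : Prop := ole x y /\ ole y x.

Definition idx (x : Ord) : Type := match x with sup A _ => A end.
Definition child (x : Ord) : idx x -> Ord :=
  match x as x0 return idx x0 -> Ord with sup A f => f end.

Definition ozero : Ord := sup Empty_set (fun e => match e with end).
Definition osucc (x : Ord) : Ord := sup unit (fun _ => x).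
Definition oone : Ord := osucc ozero.

(* least upper bound (least ordinal >= every f a) *)
Definition lub (A : Type) (f : A -> Ord) : Ord :=
  sup {a : A & idx (f a)} (fun p => child (f (projT1 p)) (projT2 p)).

Fixpoint oadd (x y : Ord) {struct y} : Ord :=
  match y with
  | sup B g => lub (option B) (fun o => match o with
                                        | None => x
                                        | Some b => osucc (oadd x (g b)) end)
  end.

Fixpoint omul (x y : Ord) {struct y} : Ord :=
  match y with
  | sup B g => lub B (fun b => oadd (omul x (g b)) x)
  end.

Fixpoint oexp (x y : Ord) {struct y} : Ord :=
  match y with
  | sup B g => lub (option B) (fun o => match o with
                                        | None => oone
                                        | Some b => omul (oexp x (g b)) x end)
  end.

Definition omega : Ord := sup nat (fun n => Nat.iter n osucc ozero).

(* least epsilon number (fixed point of omega^_) that is >= y *)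
Definition eps_ge (y : Ord) : Ord := lub nat (fun n => Nat.iter n (oexp omega) y).

Fixpoint eps (x : Ord) : Ord :=
  match x with sup A f => eps_ge (sup A (fun a => eps (f a))) end.

Definition infinite_cardinal (K : Ord) : Prop :=
  ole omega K /\
  forall y, olt y K ->
    ~ exists h : {z : Ord | olt z K} -> {z : Ord | olt z y},
        forall z z', oeq (proj1_sig (h z)) (proj1_sig (h z')) ->
                     oeq (proj1_sig z) (proj1_sig z').

Definition Lam (K : Ord) : Ord := eps (osucc K).

Definition Ord_inhabited : inhabited Ord := inhabits ozero.

Section WithLam.
Variable L : Ord.

Definition Lamj (j : nat) (x : Ord) : Ord := Nat.iter j (oexp L) x.

Definition he (xi : Ord) : Ord :=
  epsilon Ord_inhabited (fun eta =>
    (oeq xi ozero /\ oeq eta ozero) \/ (oeq xi oone /\ oeq eta oone) \/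
    (olt oone xi /\ ole (oexp L eta) xi /\ olt xi (oexp L (osucc eta)))).

Definition he_iter (k : nat) (xi : Ord) : Ord := Nat.iter k he xi.

(* Tl(xi): last term L^{xi_0} a_0 of the Cantor normal form base L *)
Definition Tl (xi : Ord) : Ord :=
  epsilon Ord_inhabited (fun tau =>
    (oeq xi ozero /\ oeq tau ozero) \/
    (~ oeq xi ozero /\ exists delta e a, olt ozero a /\ olt a L /\
        oeq xi (oadd (omul (oexp L (osucc e)) delta) (omul (oexp L e) a)) /\
        oeq tau (omul (oexp L e) a))).

Variable N : nat.

(* sequences (xi_2,...,xi_{N-1}) are functions nat -> Ord; only indices 2..N-1 matter *)
Definition irreducible (xi : nat -> Ord) : Prop :=
  forall i j, 2 <= i -> i < N - 1 -> 0 < j -> i + j <= N - 1 ->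
    olt ozero (xi i) -> ole (Lamj j (osucc (xi (i + j)))) (Tl (xi i)).

Fixpoint osum_upto (xi : nat -> Ord) (n : nat) : Ord :=
  match n with
  | 0 => ozero
  | S n' =>
      let s := osum_upto xi n' in
      if Nat.leb 2 n' then
        if excluded_middle_informative (olt ozero (xi n'))
        then oadd s (Lamj (n' - 1) (osucc (xi n')))
        else s
      else s
  end.

Definition o (xi : nat -> Ord) : Ord := osum_upto xi N.

Definition lx (nu xi : nat -> Ord) : Prop :=
  exists i, 2 <= i <= N - 1 /\ ~ oeq (nu i) (xi i) /\
    (forall l, 2 <= l < i -> oeq (nu l) (xi l)) /\
    exists k1, i <= k1 <= N - 1 /\ olt ozero (xi k1) /\
      (forall l, i <= l < k1 -> oeq (xi l) ozero) /\
      ((forall l, i <= l <= N - 1 -> oeq (nu l) ozero) \/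
       exists k0, i <= k0 <= N - 1 /\ olt ozero (nu k0) /\
         (forall l, i <= l < k0 -> oeq (nu l) ozero) /\
         ((i = k0 /\ k0 < k1 /\ ole (he_iter (k1 - i) (nu i)) (xi k1)) \/
          (k1 <= k0 /\ k1 = i /\ olt (nu k0) (he_iter (k0 - i) (xi i))))).

End WithLam.

From Stdlib Require Import Arith Lia Classical ClassicalEpsilon.

(* Let i be the first index where nu and xi differ, k1 >= i the first index with
   xi_k1 <> 0, and Q := Lambda_{k1-1}(xi_k1 + 1).  Both o(nu) and o(xi) begin with
   the same partial sum s over the indices below i, and o(xi) >= s + Q.  Since
   Lambda = epsilon_{K+1} is additively principal, so is every power of Lambda,
   in particular Q; hence o(nu) < s + Q as soon as each term of o(nu) from index
   i on is below Q.  For the first nonzero term, at index k0, this follows from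
   x < Lambda_m(he^(m)(x) + 1) in case (a) and from Lambda_m(y + 1) <= x for
   0 < y < he^(m)(x) in case (b); irreducibility of nu together with
   Tl(nu_k0) <= nu_k0 bounds all later terms by the first one. *)

Lemma ole_char x y : ole x y <-> forall a : idx x, olt (child x a) y.
Proof. destruct x, y; simpl; tauto. Qed.

Lemma olt_char x y : olt x y <-> exists b : idx y, ole x (child y b).
Proof. destruct y; simpl; tauto. Qed.

Lemma ole_refl x : ole x x.
Proof. induction x as [A f IH]; simpl; intro a; exists a; apply IH. Qed.

Lemma ole_trans x y z : ole x y -> ole y z -> ole x z.
Proof.
  revert y z; induction x as [A f IH]; intros [B g] [C h]; simpl; intros H1 H2 a.
  destruct (H1 a) as [b Hb]; destruct (H2 b) as [c Hc]; exists c; eauto.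
Qed.

Lemma ole_olt_trans x y z : ole x y -> olt y z -> olt x z.
Proof.
  intros H1 H2; apply olt_char in H2 as [b Hb]; apply olt_char; exists b; eapply ole_trans; eauto.
Qed.

Lemma olt_ole_trans x y z : olt x y -> ole y z -> olt x z.
Proof.
  intros H1 H2; apply olt_char in H1 as [b Hb]; rewrite ole_char in H2.
  specialize (H2 b); apply olt_char in H2 as [c Hc].
  apply olt_char; exists c; eapply ole_trans; eauto.
Qed.

Lemma child_le y b : ole (child y b) y.
Proof.
  induction y as [B g IH]; simpl in *. apply ole_char; intro a. simpl. exists b. apply IH.
Qed.

Lemma child_lt y b : olt (child y b) y.
Proof. apply olt_char; exists b; apply ole_refl. Qed.

Lemma olt_ole x y : olt x y -> ole x y.
Proof. intro H; apply olt_char in H as [b Hb]; eapply ole_trans; [exact Hb| apply child_le]. Qed.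

Lemma olt_trans x y z : olt x y -> olt y z -> olt x z.
Proof. intros; eapply olt_ole_trans; eauto using olt_ole. Qed.

Lemma olt_irrefl x : ~ olt x x.
Proof.
  induction x as [A f IH]; intro H; apply olt_char in H as [b Hb].
  apply (IH b). eapply olt_ole_trans; [apply (child_lt (sup A f) b)|exact Hb].
Qed.

Lemma olt_wf : well_founded olt.
Proof.
  assert (H : forall x y, ole y x -> Acc olt y).
  { induction x as [A f IH]; intros y Hy; constructor; intros z Hz.
    assert (olt z (sup A f)) by (eapply olt_ole_trans; eauto).
    simpl in H; destruct H as [b Hb]; eapply IH; eauto. }
  intro x; apply (H x), ole_refl.
Qed.

Lemma olt_least (P : Ord -> Prop) : (exists x, P x) -> exists m, P m /\ forall y, olt y m -> ~ P y.
Proof.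
  intros [x Hx]. revert Hx. induction x as [x IH] using (well_founded_ind olt_wf). intro Hx.
  destruct (classic (exists y, olt y x /\ P y)) as [[y [Hy1 Hy2]]|Hn].
  - eapply IH; eauto.
  - exists x; split; auto. intros y Hy HP; apply Hn; eauto.
Qed.

Lemma ole_or_olt x y : ole x y \/ olt y x.
Proof.
  revert y; induction x as [A f IH]; intro y.
  destruct (classic (forall a, olt (f a) y)) as [H|H].
  - left; apply ole_char; exact H.
  - apply not_all_ex_not in H as [a Ha].
    destruct (IH a y) as [H1|H1].
    + right. simpl. exists a. apply ole_char. intro b.
      destruct (IH a (child y b)) as [H2|H2]; auto.
      exfalso; apply Ha. eapply ole_olt_trans; [exact H2| apply child_lt].
    + right; simpl; exists a; apply olt_ole; auto.
Qed.

Lemma not_lt_le x y : ~ olt y x -> ole x y.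
Proof. intro H; destruct (ole_or_olt x y); tauto. Qed.

Lemma not_le_lt x y : ~ ole x y -> olt y x.
Proof. intro H; destruct (ole_or_olt x y); tauto. Qed.

Lemma le_not_lt x y : ole x y -> ~ olt y x.
Proof. intros H1 H2; apply (olt_irrefl x); eapply ole_olt_trans; eauto. Qed.

Lemma oeq_refl x : oeq x x. Proof. split; apply ole_refl. Qed.

Lemma oeq_sym x y : oeq x y -> oeq y x. Proof. unfold oeq; tauto. Qed.

Lemma oeq_trans x y z : oeq x y -> oeq y z -> oeq x z.
Proof. unfold oeq; intros [] []; split; eapply ole_trans; eauto. Qed.

Lemma le_lub A (f : A -> Ord) a : ole (f a) (lub A f).
Proof.
  apply ole_char; intro c. apply olt_char. exists (existT _ a c). apply ole_refl.
Qed.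

Lemma le_lub_eq A (f : A -> Ord) a z : z = f a -> ole z (lub A f).
Proof. intros ->; apply le_lub. Qed.

Lemma lub_le A (f : A -> Ord) R : (forall a, ole (f a) R) -> ole (lub A f) R.
Proof.
  intro H; apply ole_char; intros [a c]. simpl. eapply olt_ole_trans; [apply child_lt|apply H].
Qed.

Lemma lt_lub A (f : A -> Ord) R : olt R (lub A f) -> exists a, olt R (f a).
Proof.
  intro H; apply olt_char in H as [[a c] Hc]. exists a. simpl in Hc.
  eapply ole_olt_trans; [exact Hc| apply child_lt].
Qed.

Lemma zero_le x : ole ozero x.
Proof. simpl. destruct x; intros []. Qed.

Lemma lt_succ x : olt x (osucc x).
Proof. simpl; exists tt; apply ole_refl. Qed.

Lemma succ_le x y : olt x y <-> ole (osucc x) y.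
Proof. destruct y; simpl; split; [intros H []; auto| intro H; apply (H tt)]. Qed.

Lemma le_succ x y : ole x y <-> olt x (osucc y).
Proof. simpl; split; [intro; exists tt; auto| intros [_ H]; auto]. Qed.

Lemma succ_mono x y : ole x y -> ole (osucc x) (osucc y).
Proof. intro; apply succ_le, le_succ; auto. Qed.

Lemma oeq_succ x y : oeq x y -> oeq (osucc x) (osucc y).
Proof. intros []; split; apply succ_mono; auto. Qed.

Lemma zero_lt_succ x : olt ozero (osucc x).
Proof. apply le_succ, zero_le. Qed.

Lemma oeq_olt_trans x y z : oeq x y -> olt y z -> olt x z.
Proof. intros [H _] H2; eapply ole_olt_trans; eauto. Qed.

Lemma le_add_l x y : ole x (oadd x y).
Proof. destruct y; simpl oadd; apply (le_lub_eq _ _ None); reflexivity. Qed.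

Lemma ole_sup_child B (g : B -> Ord) y : ole (sup B g) y ->
  forall b, exists c : idx y, ole (g b) (child y c).
Proof. intros H b. rewrite ole_char in H. specialize (H b). apply olt_char in H. exact H. Qed.

Lemma add_mono_r x y y' : ole y y' -> ole (oadd x y) (oadd x y').
Proof.
  revert y'; induction y as [B g IH]; intros y' H. simpl oadd at 1.
  apply lub_le; intros [b|].
  - destruct (ole_sup_child _ _ _ H b) as [c Hc]. destruct y' as [B' g']. simpl in Hc.
    eapply ole_trans; [| apply (le_lub_eq _ _ (Some c)); reflexivity]. apply succ_mono, IH, Hc.
  - apply le_add_l.
Qed.

Lemma add_smono_r x y y' : olt y y' -> olt (oadd x y) (oadd x y').
Proof.
  intro H; apply olt_char in H as [c Hc]. destruct y' as [B' g']. simpl in Hc.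
  eapply ole_olt_trans; [apply add_mono_r; exact Hc|].
  eapply olt_ole_trans; [apply lt_succ| apply (le_lub_eq _ _ (Some c)); reflexivity].
Qed.

Lemma lt_add_cases R x y : olt R (oadd x y) -> olt R x \/
  exists c : idx y, ole R (oadd x (child y c)).
Proof.
  destruct y as [B g]; simpl oadd; intro H; apply lt_lub in H as [[b|] Hb].
  - right; exists b; apply le_succ; exact Hb.
  - left; exact Hb.
Qed.

Lemma add_le_intro x y R : ole x R -> (forall y', olt y' y -> olt (oadd x y') R) ->
  ole (oadd x y) R.
Proof.
  intros H1 H2; destruct y as [B g]; simpl oadd; apply lub_le; intros [b|]; auto.
  apply succ_le, H2, (child_lt (sup B g) b).
Qed.

Lemma add_mono_l x x' y : ole x x' -> ole (oadd x y) (oadd x' y).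
Proof.
  intro H; induction y as [B g IH]; simpl oadd; apply lub_le; intros [b|].
  - eapply ole_trans; [|apply (le_lub_eq _ _ (Some b)); reflexivity]; apply succ_mono, IH.
  - eapply ole_trans; [exact H|apply (le_lub_eq _ _ None); reflexivity].
Qed.

Lemma add_oeq x x' y y' : oeq x x' -> oeq y y' -> oeq (oadd x y) (oadd x' y').
Proof.
  intros [H1 H2] [H3 H4]; split;
    (eapply ole_trans; [apply add_mono_l; eauto| apply add_mono_r; eauto]).
Qed.

Lemma add_zero x : oeq (oadd x ozero) x.
Proof. split; [apply lub_le; intros [[]|]; apply ole_refl| apply le_add_l]. Qed.

Lemma add_succ x y : oeq (oadd x (osucc y)) (osucc (oadd x y)).
Proof.
  split.
  - apply lub_le; intros [[]|]; [apply ole_refl|].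
    eapply ole_trans; [apply le_add_l|]. apply olt_ole, lt_succ.
  - apply (le_lub _ (fun o => match o with None => x | Some b => osucc (oadd x y) end) (Some tt)).
Qed.

Lemma zero_add x : oeq (oadd ozero x) x.
Proof.
  induction x as [A f IH]; split; simpl oadd.
  - apply lub_le; intros [a|]; [|apply zero_le]. apply succ_le.
    eapply ole_olt_trans; [apply (IH a)| apply (child_lt (sup A f) a)].
  - apply ole_char; intro a; simpl child.
    eapply ole_olt_trans; [apply (IH a)|]. eapply olt_ole_trans; [apply lt_succ|].
    apply (le_lub_eq _ _ (Some a)); reflexivity.
Qed.

Lemma add_assoc x y z : oeq (oadd (oadd x y) z) (oadd x (oadd y z)).
Proof.
  induction z as [C h IH]; split.
  - simpl oadd at 1. apply lub_le; intros [c|].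
    + apply succ_le. eapply ole_olt_trans; [apply (IH c)|].
      apply add_smono_r, add_smono_r, (child_lt (sup C h) c).
    + apply add_mono_r, le_add_l.
  - apply add_le_intro.
    + eapply ole_trans; apply le_add_l.
    + intros w Hw. apply lt_add_cases in Hw as [Hw|[c Hc]].
      * eapply olt_ole_trans; [apply add_smono_r; exact Hw| apply le_add_l].
      * eapply ole_olt_trans; [apply add_mono_r; exact Hc|]. simpl child in *.
        eapply ole_olt_trans; [apply (IH c)|]. apply add_smono_r, (child_lt (sup C h) c).
Qed.

Lemma le_add_r x y : ole x (oadd y x).
Proof.
  induction x as [A f IH]; apply ole_char; intro a; simpl child.
  eapply ole_olt_trans; [apply IH|]. apply add_smono_r, (child_lt (sup A f) a).
Qed.

Lemma lt_add_pos x y : olt ozero y -> olt x (oadd x y).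
Proof. intro H; eapply oeq_olt_trans; [apply oeq_sym, add_zero| apply add_smono_r; auto]. Qed.

Lemma succ_add1 x : oeq (osucc x) (oadd x oone).
Proof. apply oeq_sym; eapply oeq_trans; [apply add_succ| apply oeq_succ, add_zero]. Qed.

Lemma mul_mono_r x y y' : ole y y' -> ole (omul x y) (omul x y').
Proof.
  revert y'; induction y as [B g IH]; intros y' H. simpl omul at 1.
  apply lub_le; intro b.
  destruct (ole_sup_child _ _ _ H b) as [c Hc]. destruct y' as [B' g']. simpl in Hc.
  eapply ole_trans; [| apply (le_lub_eq _ _ c); reflexivity]. apply add_mono_l, IH, Hc.
Qed.

Lemma mul_mono_l x x' y : ole x x' -> ole (omul x y) (omul x' y).
Proof.
  intro H; induction y as [B g IH]; simpl omul; apply lub_le; intro b.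
  eapply ole_trans; [| apply (le_lub_eq _ _ b); reflexivity].
  eapply ole_trans; [apply add_mono_l, IH| apply add_mono_r, H].
Qed.

Lemma mul_oeq x x' y y' : oeq x x' -> oeq y y' -> oeq (omul x y) (omul x' y').
Proof.
  intros [H1 H2] [H3 H4]; split;
    (eapply ole_trans; [apply mul_mono_l; eauto| apply mul_mono_r; eauto]).
Qed.

Lemma mul_zero x : oeq (omul x ozero) ozero.
Proof. split; [apply lub_le; intros []| apply zero_le]. Qed.

Lemma mul_succ x y : oeq (omul x (osucc y)) (oadd (omul x y) x).
Proof.
  split; [apply lub_le; intros []; apply ole_refl|].
  simpl omul; apply (le_lub_eq _ _ tt); reflexivity.
Qed.

Lemma lt_mul_cases R x y : olt R (omul x y) ->
  exists c : idx y, olt R (oadd (omul x (child y c)) x).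
Proof. destruct y as [B g]; simpl omul; intro H; apply lt_lub in H; exact H. Qed.

Lemma mul_add_le_of_lt x y y' : olt y' y -> ole (oadd (omul x y') x) (omul x y).
Proof.
  intro H. eapply ole_trans; [apply mul_succ| apply mul_mono_r, succ_le, H].
Qed.

Lemma mul_le_intro x y R : (forall y', olt y' y -> ole (oadd (omul x y') x) R) -> ole (omul x y) R.
Proof.
  intro H; destruct y as [B g]; simpl omul; apply lub_le; intro b; apply H, (child_lt (sup B g) b).
Qed.

Lemma mul_smono_r x y y' : olt ozero x -> olt y y' -> olt (omul x y) (omul x y').
Proof.
  intros H1 H2; eapply olt_ole_trans; [apply lt_add_pos, H1| apply mul_add_le_of_lt, H2].
Qed.

Lemma mul_one x : oeq (omul x oone) x.
Proof.
  eapply oeq_trans; [apply mul_succ|].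
  eapply oeq_trans; [apply add_oeq; [apply mul_zero| apply oeq_refl]| apply zero_add].
Qed.

Lemma mul_distr x a b : oeq (omul x (oadd a b)) (oadd (omul x a) (omul x b)).
Proof.
  induction b as [B g IH]; split.
  - apply mul_le_intro; intros y' Hy. apply lt_add_cases in Hy as [Hy|[c Hc]].
    + eapply ole_trans; [apply mul_add_le_of_lt, Hy| apply le_add_l].
    + simpl child in Hc. eapply ole_trans; [apply add_mono_l, mul_mono_r, Hc|].
      eapply ole_trans; [apply add_mono_l, (IH c)|].
      eapply ole_trans; [apply add_assoc|].
      apply add_mono_r, mul_add_le_of_lt, (child_lt (sup B g) c).
  - apply add_le_intro; [apply mul_mono_r, le_add_l|].
    intros w Hw. apply lt_mul_cases in Hw as [c Hc]. simpl child in Hc.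
    eapply olt_ole_trans; [apply add_smono_r, Hc|].
    eapply ole_trans; [apply add_assoc|]. eapply ole_trans; [apply add_mono_l, (IH c)|].
    apply mul_add_le_of_lt, add_smono_r, (child_lt (sup B g) c).
Qed.

Lemma mul_assoc x y z : oeq (omul (omul x y) z) (omul x (omul y z)).
Proof.
  induction z as [C h IH]; split.
  - simpl omul at 1. apply lub_le; intro c.
    eapply ole_trans; [apply add_mono_l, (IH c)|]. eapply ole_trans; [apply mul_distr|].
    apply mul_mono_r. simpl omul. apply (le_lub_eq _ _ c); reflexivity.
  - apply mul_le_intro; intros w Hw. apply lt_mul_cases in Hw as [c Hc]. simpl child in Hc.
    eapply ole_trans; [apply mul_succ|]. eapply ole_trans; [apply mul_mono_r, succ_le, Hc|].
    eapply ole_trans; [apply mul_distr|]. eapply ole_trans; [apply add_mono_l, (IH c)|].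
    simpl omul. apply (le_lub_eq _ _ c); reflexivity.
Qed.

Lemma le_mul_r d x : ole oone d -> ole x (omul d x).
Proof.
  intro Hd; induction x as [A f IH]; apply ole_char; intro a; simpl child.
  eapply ole_olt_trans; [apply (IH a)|]. eapply olt_ole_trans; [apply lt_add_pos, succ_le, Hd|].
  apply mul_add_le_of_lt, (child_lt (sup A f) a).
Qed.

Lemma le_mul_l d x : ole oone d -> ole x (omul x d).
Proof.
  intro Hd. eapply ole_trans; [apply mul_one|]. apply mul_mono_r, Hd.
Qed.

Lemma lt_mul_base a B : olt ozero a -> olt oone B -> olt a (omul a B).
Proof.
  intros Ha HB. eapply oeq_olt_trans; [apply oeq_sym, mul_one|]. apply mul_smono_r; auto.
Qed.

Lemma one_le_exp x y : ole oone (oexp x y).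
Proof. destruct y; simpl oexp; apply (le_lub_eq _ _ None); reflexivity. Qed.

Lemma exp_pos x y : olt ozero (oexp x y).
Proof. eapply olt_ole_trans; [apply zero_lt_succ| apply one_le_exp]. Qed.

Lemma exp_mono_r x y y' : ole y y' -> ole (oexp x y) (oexp x y').
Proof.
  revert y'; induction y as [B g IH]; intros y' H. simpl oexp at 1.
  apply lub_le; intros [b|]; [|apply one_le_exp].
  destruct (ole_sup_child _ _ _ H b) as [c Hc]. destruct y' as [B' g']. simpl in Hc.
  eapply ole_trans; [| simpl oexp; apply (le_lub_eq _ _ (Some c)); reflexivity].
  apply mul_mono_l, IH, Hc.
Qed.

Lemma exp_oeq_r x y y' : oeq y y' -> oeq (oexp x y) (oexp x y').
Proof. intros []; split; apply exp_mono_r; auto. Qed.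

Lemma exp_succ x y : ole oone x -> oeq (oexp x (osucc y)) (omul (oexp x y) x).
Proof.
  intro H; split.
  - apply lub_le; intros [[]|]; [apply ole_refl|].
    eapply ole_trans; [apply one_le_exp|]. apply le_mul_l, H.
  - simpl oexp. apply (le_lub_eq _ _ (Some tt)); reflexivity.
Qed.

Lemma lt_exp_cases R x y : olt R (oexp x y) -> olt R oone \/
  exists c : idx y, olt R (omul (oexp x (child y c)) x).
Proof.
  destruct y as [B g]; simpl oexp; intro H.
  apply lt_lub in H as [[b|] Hb]; [right; exists b|left]; exact Hb.
Qed.

Lemma exp_mul_le_of_lt x y y' : ole oone x -> olt y' y -> ole (omul (oexp x y') x) (oexp x y).
Proof. intros H1 H2; eapply ole_trans; [apply exp_succ; auto| apply exp_mono_r, succ_le, H2]. Qed.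

Lemma exp_le_intro x y R : ole oone R -> (forall y', olt y' y -> ole (omul (oexp x y') x) R) ->
  ole (oexp x y) R.
Proof.
  intros H1 H2; destruct y as [B g]; simpl oexp; apply lub_le; intros [b|]; auto.
  apply H2, (child_lt (sup B g) b).
Qed.

Lemma exp_smono_r x y y' : olt oone x -> olt y y' -> olt (oexp x y) (oexp x y').
Proof.
  intros H1 H2. eapply olt_ole_trans; [apply lt_mul_base; [apply exp_pos| exact H1]|].
  apply exp_mul_le_of_lt; auto. apply olt_ole; auto.
Qed.

Lemma mul_le_zero x y : ole y ozero -> ole (omul x y) ozero.
Proof. intro H; eapply ole_trans; [apply mul_mono_r, H| apply mul_zero]. Qed.

Lemma exp_add x a b : ole oone x -> oeq (oexp x (oadd a b)) (omul (oexp x a) (oexp x b)).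
Proof.
  intro Hx; induction b as [B g IH]; split.
  - apply exp_le_intro.
    + eapply ole_trans; [apply one_le_exp with (x := x) (y := a)|]. apply le_mul_l, one_le_exp.
    + intros w Hw. apply lt_add_cases in Hw as [Hw|[c Hc]].
      * eapply ole_trans; [apply exp_mul_le_of_lt; eauto|]. apply le_mul_l, one_le_exp.
      * simpl child in Hc. eapply ole_trans; [apply mul_mono_l, exp_mono_r, Hc|].
        eapply ole_trans; [apply mul_mono_l, (IH c)|]. eapply ole_trans; [apply mul_assoc|].
        apply mul_mono_r. apply exp_mul_le_of_lt; auto. apply (child_lt (sup B g) c).
  - apply mul_le_intro; intros w Hw. apply lt_exp_cases in Hw as [Hw|[c Hc]].
    + apply le_succ in Hw. eapply ole_trans; [apply add_mono_l, mul_le_zero, Hw|].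
      eapply ole_trans; [apply (proj1 (zero_add _))|]. apply exp_mono_r, le_add_l.
    + simpl child in Hc. eapply ole_trans; [apply mul_succ|].
      eapply ole_trans; [apply mul_mono_r, succ_le, Hc|].
      eapply ole_trans; [apply mul_assoc|].
      eapply ole_trans; [apply mul_mono_l, (IH c)|].
      apply exp_mul_le_of_lt; auto. apply add_smono_r, (child_lt (sup B g) c).
Qed.

Lemma le_exp B x : olt oone B -> ole x (oexp B x).
Proof.
  intro HB; induction x as [A f IH]; apply ole_char; intro a; simpl child.
  eapply ole_olt_trans; [apply (IH a)|].
  eapply olt_ole_trans; [apply lt_mul_base; [apply exp_pos|exact HB]|].
  apply exp_mul_le_of_lt; [apply olt_ole; auto| apply (child_lt (sup A f) a)].
Qed.

Lemma add_sub_exists y x : ole y x -> exists z, oeq (oadd y z) x.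
Proof.
  intro Hyx.
  destruct (olt_least (fun m => olt x (oadd y m))) as [m [Hm Hmin]].
  { exists (osucc x). eapply olt_ole_trans; [apply lt_succ|].
    eapply ole_trans; [apply succ_mono, le_add_r with (y := y)| apply add_succ]. }
  apply lt_add_cases in Hm as [Hm|[c Hc]].
  - exfalso; eapply le_not_lt; eauto.
  - exists (child m c); split; auto.
    apply not_lt_le. apply Hmin, child_lt.
Qed.

Lemma div_mod_exists d x : olt ozero d -> exists q r, oeq x (oadd (omul d q) r) /\ olt r d.
Proof.
  intro Hd.
  destruct (olt_least (fun m => olt x (omul d m))) as [m [Hm Hmin]].
  { exists (osucc x). eapply olt_ole_trans; [apply lt_add_pos, Hd|].
    eapply ole_trans; [apply add_mono_l, le_mul_r, succ_le, Hd| apply mul_succ]. }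
  apply lt_mul_cases in Hm as [c Hc].
  assert (H1 : ole (omul d (child m c)) x) by (apply not_lt_le, Hmin, child_lt).
  destruct (add_sub_exists _ _ H1) as [r Hr].
  exists (child m c), r; split; [apply oeq_sym; auto|].
  apply not_le_lt; intro H. apply (olt_irrefl x). eapply olt_ole_trans; [exact Hc|].
  eapply ole_trans; [apply add_mono_r, H| apply Hr].
Qed.

Lemma log_exists L x : olt oone L -> ole oone x ->
  exists e, ole (oexp L e) x /\ olt x (oexp L (osucc e)).
Proof.
  intros HL Hx.
  destruct (olt_least (fun m => olt x (oexp L m))) as [m [Hm Hmin]].
  { exists (osucc x). eapply ole_olt_trans; [apply le_exp, HL|].
    apply exp_smono_r; auto; apply lt_succ. }
  apply lt_exp_cases in Hm as [Hm|[c Hc]].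
  - exfalso; eapply le_not_lt; eauto.
  - exists (child m c); split.
    + apply not_lt_le, Hmin, child_lt.
    + eapply olt_ole_trans; [exact Hc| apply exp_succ, olt_ole, HL].
Qed.

Lemma cnf_leading_term L x : olt oone L -> olt ozero x ->
  exists eta q r, olt ozero q /\ olt q L /\ olt r (oexp L eta) /\
    oeq x (oadd (omul (oexp L eta) q) r).
Proof.
  intros HL Hx. assert (HL1 : ole oone L) by (apply olt_ole, HL).
  destruct (log_exists L x HL) as [eta [He1 He2]]; [apply succ_le, Hx|].
  destruct (div_mod_exists (oexp L eta) x (exp_pos _ _)) as [q [r [Hqr Hr]]].
  exists eta, q, r; split; [|split; [|split; [exact Hr| exact Hqr]]].
  - apply not_le_lt; intro H. apply (olt_irrefl x). eapply ole_olt_trans; [apply Hqr|].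
    eapply ole_olt_trans; [apply add_mono_l, mul_le_zero, H|].
    eapply ole_olt_trans; [apply (proj1 (zero_add _))|].
    eapply olt_ole_trans; [exact Hr| exact He1].
  - apply not_le_lt; intro H. apply (olt_irrefl x). eapply olt_ole_trans; [exact He2|].
    eapply ole_trans; [apply exp_succ, HL1|]. eapply ole_trans; [apply mul_mono_r, H|].
    eapply ole_trans; [apply le_add_l| apply Hqr].
Qed.

Lemma cnf_last_term L x : olt oone L -> olt ozero x ->
  exists delta e a, olt ozero a /\ olt a L /\
    oeq x (oadd (omul (oexp L (osucc e)) delta) (omul (oexp L e) a)).
Proof.
  intro HL. assert (HL1 : ole oone L) by (apply olt_ole, HL).
  induction x as [x IH] using (well_founded_ind olt_wf). intro Hx.
  destruct (cnf_leading_term L x HL Hx) as [eta [q [r [Hq0 [Hq1 [Hr Hqr]]]]]].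
  destruct (ole_or_olt r ozero) as [Hr0|Hr0].
  - exists ozero, eta, q; repeat split; auto.
    + eapply ole_trans; [apply Hqr|]. eapply ole_trans; [apply add_mono_r, Hr0|].
      eapply ole_trans; [apply (proj1 (add_zero _))|]. apply le_add_r.
    + eapply ole_trans; [apply add_mono_l, (proj1 (mul_zero _))|].
      eapply ole_trans; [apply (proj1 (zero_add _))|].
      eapply ole_trans; [|apply Hqr]. apply le_add_l.
  - assert (Hrx : olt r x).
    { eapply olt_ole_trans; [exact Hr|]. eapply ole_trans; [apply le_mul_l, succ_le, Hq0|].
      eapply ole_trans; [apply le_add_l| apply Hqr]. }
    destruct (IH r Hrx Hr0) as [dl [e [a [Ha0 [HaL Hr']]]]].
    assert (Hee : olt e eta).
    { apply not_le_lt; intro H. apply (olt_irrefl r). eapply olt_ole_trans; [exact Hr|].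
      eapply ole_trans; [apply exp_mono_r, H|]. eapply ole_trans; [apply le_mul_l, succ_le, Ha0|].
      eapply ole_trans; [apply le_add_r|]. apply Hr'. }
    destruct (add_sub_exists _ _ (proj1 (succ_le _ _) Hee)) as [z Hz].
    set (S := oexp L (osucc e)).
    assert (HLeta : oeq (oexp L eta) (omul S (oexp L z))).
    { eapply oeq_trans; [apply exp_oeq_r, oeq_sym, Hz| apply exp_add, HL1]. }
    exists (oadd (omul (oexp L z) q) dl), e, a; split; [exact Ha0| split; [exact HaL|]].
    eapply oeq_trans; [exact Hqr|].
    eapply oeq_trans; [apply add_oeq; [apply mul_oeq; [exact HLeta| apply oeq_refl]| exact Hr']|].
    eapply oeq_trans; [apply oeq_sym, add_assoc|].
    apply add_oeq; [|apply oeq_refl].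
    eapply oeq_trans; [|apply oeq_sym, mul_distr].
    apply add_oeq; [apply mul_assoc| apply oeq_refl].
Qed.

Lemma Tl_le L x : olt oone L -> olt ozero x -> ole (Tl L x) x.
Proof.
  intros HL Hx. unfold Tl.
  (* [Tl] is chosen by [epsilon]: its specification is only available once a
     witness, here the last term of the Cantor normal form, is exhibited. *)
  match goal with
  | |- ole (epsilon ?i ?P) x =>
      destruct (epsilon_spec i P) as [[H1 _]|[_ [dl [e [a [_ [_ [H1 H2]]]]]]]]
  end.
  - destruct (cnf_last_term L x HL Hx) as [dl [e [a [H1 [H2 H3]]]]].
    exists (omul (oexp L e) a); right; split.
    + intros [H _]. eapply le_not_lt; eauto.
    + exists dl, e, a; exact (conj H1 (conj H2 (conj H3 (oeq_refl _)))).
  - exfalso; eapply le_not_lt; [exact (proj1 H1)|exact Hx].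
  - eapply ole_trans; [apply H2|]. eapply ole_trans; [apply le_add_r|]. apply H1.
Qed.

Lemma he_spec L x : olt oone L ->
  (oeq x ozero /\ oeq (he L x) ozero) \/ (oeq x oone /\ oeq (he L x) oone) \/
  (olt oone x /\ ole (oexp L (he L x)) x /\ olt x (oexp L (osucc (he L x)))).
Proof.
  intro HL. unfold he. apply epsilon_spec.
  destruct (ole_or_olt x ozero) as [H0|H0].
  - exists ozero; left; split; [split; auto; apply zero_le| apply oeq_refl].
  - destruct (ole_or_olt x oone) as [H1|H1].
    + exists oone; right; left; split; [split; auto; apply succ_le, H0| apply oeq_refl].
    + destruct (log_exists L x HL (olt_ole _ _ H1)) as [e [He1 He2]].
      exists e; right; right; auto.
Qed.

Lemma lt_exp_succ_he L x : olt oone L -> olt x (oexp L (osucc (he L x))).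
Proof.
  intro HL. destruct (he_spec L x HL) as [[H1 _]|[[H1 _]|[_ [_ H]]]]; auto.
  - eapply ole_olt_trans; [exact (proj1 H1)| apply exp_pos].
  - eapply ole_olt_trans; [exact (proj1 H1)|].
    eapply ole_olt_trans; [apply one_le_exp with (y := he L x)|].
    apply exp_smono_r; auto; apply lt_succ.
Qed.

Lemma Lamj_mono L j x y : ole x y -> ole (Lamj L j x) (Lamj L j y).
Proof. induction j; simpl; auto using exp_mono_r. Qed.

Lemma Lamj_smono L j x y : olt oone L -> olt x y -> olt (Lamj L j x) (Lamj L j y).
Proof. intro HL; induction j; simpl; auto using exp_smono_r. Qed.

Lemma Lamj_oeq L j x y : oeq x y -> oeq (Lamj L j x) (Lamj L j y).
Proof. intros []; split; apply Lamj_mono; auto. Qed.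

Lemma Lamj_add L a b x : Lamj L (a + b) x = Lamj L a (Lamj L b x).
Proof. unfold Lamj; apply Nat.iter_add. Qed.

Lemma Lamj_pred L j x : 1 <= j -> Lamj L j x = oexp L (Lamj L (j - 1) x).
Proof. destruct j; [lia|]. intros _. simpl. rewrite Nat.sub_0_r. reflexivity. Qed.

Lemma Lamj_S_r L j x : Lamj L (S j) x = Lamj L j (oexp L x).
Proof. unfold Lamj; apply Nat.iter_succ_r. Qed.

Lemma Lamj_ge L j x : olt oone L -> ole x (Lamj L j x).
Proof.
  intro HL; induction j; simpl; [apply ole_refl|]. eapply ole_trans; [exact IHj| apply le_exp, HL].
Qed.

Lemma lt_Lamj_succ_he_iter L m x : olt oone L -> olt x (Lamj L m (osucc (he_iter L m x))).
Proof.
  intro HL; revert x; induction m; intro x; [apply lt_succ|].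
  unfold he_iter; rewrite Nat.iter_succ_r. fold (he_iter L m (he L x)).
  change (Lamj L (S m) ?w) with (oexp L (Lamj L m w)).
  eapply olt_ole_trans; [apply lt_exp_succ_he, HL|]. apply exp_mono_r, succ_le, IHm.
Qed.

Lemma Lamj_le_of_le_he_iter L m x w : olt oone L -> olt oone (he_iter L m x) ->
  ole w (he_iter L m x) -> ole (Lamj L m w) x.
Proof.
  intro HL; revert w; induction m; intros w H1 H2; [exact H2|].
  rewrite Lamj_S_r. change (he_iter L (S m) x) with (he L (he_iter L m x)) in *.
  set (z := he_iter L m x) in *.
  destruct (he_spec L z HL) as [[_ H]|[[_ H]|[Hz [Hz1 _]]]].
  - exfalso; eapply le_not_lt; [apply (proj1 H)|]. eapply olt_trans; [apply zero_lt_succ| exact H1].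
  - exfalso; eapply le_not_lt; [apply (proj1 H)| exact H1].
  - apply IHm; auto. eapply ole_trans; [apply exp_mono_r, H2| exact Hz1].
Qed.

Definition add_principal (X : Ord) : Prop := forall u v, olt u X -> olt v X -> olt (oadd u v) X.

Lemma add_principal_mul L Z : olt oone L -> add_principal L -> add_principal (omul Z L).
Proof.
  intros HL HAP u v Hu Hv.
  apply lt_mul_cases in Hu as [c Hc]; apply lt_mul_cases in Hv as [c' Hc'].
  assert (Hs : forall c : idx L, olt (osucc (child L c)) L).
  { intro d. eapply oeq_olt_trans; [apply succ_add1|]. apply HAP; auto; apply child_lt. }
  eapply olt_ole_trans; [apply add_smono_r, Hc'|].
  eapply ole_trans; [apply add_mono_l, olt_ole, Hc|].
  eapply ole_trans; [apply (proj2 (add_oeq _ _ _ _ (mul_succ _ _) (mul_succ _ _)))|].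
  eapply ole_trans; [apply (proj2 (mul_distr _ _ _))|].
  apply mul_mono_r, olt_ole, HAP; auto.
Qed.

Lemma add_principal_exp L b : olt oone L -> add_principal L -> add_principal (oexp L b).
Proof.
  intros HL HAP u v Hu Hv.
  apply lt_exp_cases in Hu as [Hu|[c Hc]].
  { apply le_succ in Hu. eapply ole_olt_trans; [apply add_mono_l, Hu|].
    eapply ole_olt_trans; [apply (proj1 (zero_add _))| exact Hv]. }
  apply lt_exp_cases in Hv as [Hv|[c' Hc']].
  { apply le_succ in Hv. eapply ole_olt_trans; [apply add_mono_r, Hv|].
    eapply ole_olt_trans; [apply (proj1 (add_zero _))| eapply olt_ole_trans; [exact Hc|]].
    apply exp_mul_le_of_lt; [apply olt_ole, HL| apply child_lt]. }
  assert (H : forall d, olt u (omul (oexp L d) L) -> olt v (omul (oexp L d) L) -> olt d b ->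
     olt (oadd u v) (oexp L b)).
  { intros d H1 H2 H3. eapply olt_ole_trans; [apply (add_principal_mul L (oexp L d)); auto|].
    apply exp_mul_le_of_lt; auto; apply olt_ole, HL. }
  destruct (ole_or_olt (child b c) (child b c')) as [Hcc|Hcc].
  - apply (H (child b c')); auto; [| apply child_lt].
    eapply olt_ole_trans; [exact Hc| apply mul_mono_l, exp_mono_r, Hcc].
  - apply (H (child b c)); auto; [| apply child_lt].
    eapply olt_ole_trans; [exact Hc'| apply mul_mono_l, exp_mono_r, olt_ole, Hcc].
Qed.

Lemma add_iter_succ x m : ole (oadd x (Nat.iter m osucc ozero)) (Nat.iter m osucc x).
Proof.
  induction m.
  - apply (proj1 (add_zero _)).
  - simpl Nat.iter.
    eapply ole_trans; [apply (proj1 (add_succ _ _))| apply succ_mono, IHm].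
Qed.

Lemma add_principal_omega : add_principal omega.
Proof.
  intros u v [n Hn] [k Hk]. exists (k + n).
  eapply ole_trans; [apply add_mono_l, Hn|]. eapply ole_trans; [apply add_mono_r, Hk|].
  eapply ole_trans; [apply add_iter_succ|]. rewrite Nat.iter_add; apply ole_refl.
Qed.

Lemma one_lt_omega : olt oone omega.
Proof. exists 1. apply ole_refl. Qed.

Lemma iter_exp_omega_mono y n m : n <= m ->
  ole (Nat.iter n (oexp omega) y) (Nat.iter m (oexp omega) y).
Proof.
  induction 1; [apply ole_refl|]. eapply ole_trans; [exact IHle|]. simpl.
  apply le_exp, one_lt_omega.
Qed.

Lemma add_principal_eps_ge y : add_principal (eps_ge y).
Proof.
  intros u v Hu Hv. apply lt_lub in Hu as [n Hn]; apply lt_lub in Hv as [m Hm].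
  set (M := Nat.max n m).
  eapply olt_ole_trans; [| apply (le_lub_eq _ _ (S M)); reflexivity].
  change (Nat.iter (S M) (oexp omega) y) with (oexp omega (Nat.iter M (oexp omega) y)).
  apply add_principal_exp; [apply one_lt_omega| apply add_principal_omega| |].
  - eapply olt_ole_trans; [exact Hn|].
    eapply ole_trans; [apply (iter_exp_omega_mono y n M); lia|]. apply le_exp, one_lt_omega.
  - eapply olt_ole_trans; [exact Hm|].
    eapply ole_trans; [apply (iter_exp_omega_mono y m M); lia|]. apply le_exp, one_lt_omega.
Qed.

Lemma one_lt_eps_ge y : olt oone (eps_ge y).
Proof.
  eapply olt_ole_trans; [apply one_lt_omega|].
  eapply ole_trans; [| apply (le_lub_eq _ _ 2); reflexivity].
  change (Nat.iter 2 (oexp omega) y) with (oexp omega (oexp omega y)).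
  eapply ole_trans; [| apply exp_mono_r, one_le_exp].
  eapply ole_trans; [| apply (proj2 (exp_succ _ _ (olt_ole _ _ one_lt_omega)))].
  eapply ole_trans; [apply (le_mul_r oone), ole_refl|]. apply mul_mono_l, one_le_exp.
Qed.

Lemma Lam_is_eps_ge K : exists y, Lam K = eps_ge y.
Proof. exists (sup unit (fun _ => eps K)); reflexivity. Qed.

Lemma one_lt_Lam K : olt oone (Lam K).
Proof. destruct (Lam_is_eps_ge K) as [y ->]; apply one_lt_eps_ge. Qed.

Lemma add_principal_Lam K : add_principal (Lam K).
Proof. destruct (Lam_is_eps_ge K) as [y ->]; apply add_principal_eps_ge. Qed.

Lemma osum_upto_S L xi n : osum_upto L xi (S n) =
  if Nat.leb 2 n then
    if excluded_middle_informative (olt ozero (xi n))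
    then oadd (osum_upto L xi n) (Lamj L (n - 1) (osucc (xi n)))
    else osum_upto L xi n
  else osum_upto L xi n.
Proof. reflexivity. Qed.

Lemma osum_upto_le_S L xi n : ole (osum_upto L xi n) (osum_upto L xi (S n)).
Proof.
  rewrite osum_upto_S.
  destruct (Nat.leb 2 n); [destruct excluded_middle_informative|]; auto using le_add_l, ole_refl.
Qed.

Lemma osum_upto_mono L xi n m : n <= m -> ole (osum_upto L xi n) (osum_upto L xi m).
Proof.
  induction 1; [apply ole_refl| eapply ole_trans; [exact IHle| apply osum_upto_le_S]].
Qed.

Lemma osum_upto_oeq L nu xi n : (forall l, 2 <= l < n -> oeq (nu l) (xi l)) ->
  oeq (osum_upto L nu n) (osum_upto L xi n).
Proof.
  induction n; intro H; [apply oeq_refl|]. rewrite !osum_upto_S.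
  assert (IH : oeq (osum_upto L nu n) (osum_upto L xi n)) by (apply IHn; intros; apply H; lia).
  destruct (Nat.leb 2 n) eqn:E; [|exact IH].
  apply Nat.leb_le in E. assert (Hn : oeq (nu n) (xi n)) by (apply H; lia).
  destruct (excluded_middle_informative (olt ozero (nu n))) as [h1|h1];
  destruct (excluded_middle_informative (olt ozero (xi n))) as [h2|h2].
  - apply add_oeq; auto. apply Lamj_oeq, oeq_succ, Hn.
  - exfalso; apply h2; eapply olt_ole_trans; [exact h1| apply Hn].
  - exfalso; apply h1; eapply olt_ole_trans; [exact h2| apply Hn].
  - exact IH.
Qed.

Lemma osum_upto_add_term_le L xi i k n : i <= k < n -> 2 <= k -> olt ozero (xi k) ->
  ole (oadd (osum_upto L xi i) (Lamj L (k - 1) (osucc (xi k)))) (osum_upto L xi n).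
Proof.
  intros Hk H2 Hx.
  assert (Hstep : ole (oadd (osum_upto L xi k) (Lamj L (k - 1) (osucc (xi k))))
                      (osum_upto L xi (S k))).
  { rewrite osum_upto_S, (proj2 (Nat.leb_le 2 k) H2).
    destruct excluded_middle_informative; [apply ole_refl| contradiction]. }
  eapply ole_trans; [apply add_mono_l, (osum_upto_mono L xi i k); lia|].
  eapply ole_trans; [exact Hstep| apply osum_upto_mono; lia].
Qed.

Lemma osum_upto_lt_add L nu i Q : add_principal Q -> olt ozero Q ->
  forall n, i <= n ->
  (forall l, i <= l < n -> olt ozero (nu l) -> olt (Lamj L (l - 1) (osucc (nu l))) Q) ->
  olt (osum_upto L nu n) (oadd (osum_upto L nu i) Q).
Proof.
  intros HQ HQ0. induction 1 as [|n Hn IH]; intro H.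
  - apply lt_add_pos, HQ0.
  - assert (IH' := IH (fun l Hl => H l ltac:(lia))).
    rewrite osum_upto_S. destruct (Nat.leb 2 n); [|exact IH'].
    destruct excluded_middle_informative as [h|h]; [|exact IH'].
    assert (Ht := H n ltac:(lia) h).
    apply lt_add_cases in IH' as [Hs|[c Hc]].
    + eapply ole_olt_trans; [apply add_mono_l, olt_ole, Hs|]. apply add_smono_r, Ht.
    + eapply ole_olt_trans; [apply add_mono_l, Hc|].
      eapply ole_olt_trans; [apply (proj1 (add_assoc _ _ _))|].
      apply add_smono_r, HQ; [apply child_lt| exact Ht].
Qed.

Section Comparison.

Variable L : Ord.
Hypothesis one_lt_L : olt oone L.
Hypothesis L_principal : add_principal L.

Lemma add_principal_Lamj j x : 1 <= j -> add_principal (Lamj L j x).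
Proof. intro Hj; rewrite Lamj_pred by exact Hj. apply add_principal_exp; auto. Qed.

Lemma succ_lt_Lamj_of_he_iter_le m x y : 1 <= m -> ole (he_iter L m x) y ->
  olt (osucc x) (Lamj L m (osucc y)).
Proof.
  intros Hm Hxy.
  assert (Hx : olt x (Lamj L m (osucc y))).
  { eapply olt_ole_trans; [apply lt_Lamj_succ_he_iter, one_lt_L|].
    apply Lamj_mono, succ_mono, Hxy. }
  assert (H1 : olt oone (Lamj L m (osucc y))).
  { rewrite Lamj_pred by exact Hm. eapply ole_olt_trans; [apply (one_le_exp L ozero)|].
    apply exp_smono_r; auto. eapply olt_ole_trans; [apply zero_lt_succ| apply Lamj_ge, one_lt_L]. }
  eapply oeq_olt_trans; [apply succ_add1|]. apply add_principal_Lamj; auto.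
Qed.

Lemma Lamj_succ_le_of_lt_he_iter m x y : olt ozero y -> olt y (he_iter L m x) ->
  ole (Lamj L m (osucc y)) x.
Proof.
  intros Hy Hyx. apply Lamj_le_of_le_he_iter; auto.
  - eapply ole_olt_trans; [apply succ_le, Hy| exact Hyx].
  - apply succ_le, Hyx.
Qed.

Lemma irreducible_Lamj_le N nu k l : irreducible L N nu -> 2 <= k -> k < l <= N - 1 ->
  olt ozero (nu k) -> ole (Lamj L (l - 1) (osucc (nu l))) (Lamj L (k - 1) (nu k)).
Proof.
  intros Irr Hk Hl Hnk.
  assert (H := Irr k (l - k) Hk ltac:(lia) ltac:(lia) ltac:(lia) Hnk).
  replace (k + (l - k)) with l in H by lia.
  replace (l - 1) with ((k - 1) + (l - k)) by lia. rewrite Lamj_add.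
  apply Lamj_mono. eapply ole_trans; [exact H| apply Tl_le; auto].
Qed.

Lemma lx_terms_lt N nu xi i k0 k1 : irreducible L N nu -> 2 <= i -> k1 <= N - 1 ->
  i <= k0 <= N - 1 -> olt ozero (nu k0) -> (forall l, i <= l < k0 -> oeq (nu l) ozero) ->
  (i = k0 /\ k0 < k1 /\ ole (he_iter L (k1 - i) (nu i)) (xi k1)) \/
  (k1 <= k0 /\ k1 = i /\ olt (nu k0) (he_iter L (k0 - i) (xi i))) ->
  forall l, i <= l < N -> olt ozero (nu l) ->
  olt (Lamj L (l - 1) (osucc (nu l))) (Lamj L (k1 - 1) (osucc (xi k1))).
Proof.
  intros Irr Hi Hk1 Hk0 Hnk0 Hzero Hcase.
  assert (Hlead : olt (Lamj L (k0 - 1) (osucc (nu k0))) (Lamj L (k1 - 1) (osucc (xi k1)))).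
  { destruct Hcase as [[-> [Hk01 Hhe]]|[Hk10 [-> Hlt]]].
    - replace (k1 - 1) with ((k0 - 1) + (k1 - k0)) by lia. rewrite Lamj_add.
      apply Lamj_smono, succ_lt_Lamj_of_he_iter_le; auto; lia.
    - replace (k0 - 1) with ((i - 1) + (k0 - i)) by lia. rewrite Lamj_add.
      eapply ole_olt_trans; [apply Lamj_mono, Lamj_succ_le_of_lt_he_iter; eauto|].
      apply Lamj_smono, lt_succ; auto. }
  intros l Hl Hnl.
  destruct (Nat.lt_trichotomy l k0) as [Hlk|[->|Hlk]].
  - exfalso. eapply le_not_lt; [apply (proj1 (Hzero l ltac:(lia)))| exact Hnl].
  - exact Hlead.
  - eapply ole_olt_trans; [| exact Hlead].
    eapply ole_trans; [apply (irreducible_Lamj_le N nu k0 l); auto; lia|].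
    apply Lamj_mono, olt_ole, lt_succ.
Qed.

Lemma o_lt_of_lx N nu xi : irreducible L N nu -> lx L N nu xi -> olt (o L N nu) (o L N xi).
Proof.
  intros Irr [i [Hi [_ [Hpre [k1 [Hk1 [Hxk1 [_ Hcase]]]]]]]].
  set (Q := Lamj L (k1 - 1) (osucc (xi k1))).
  assert (HQ : add_principal Q) by (apply add_principal_Lamj; lia).
  assert (HQ0 : olt ozero Q).
  { unfold Q; rewrite Lamj_pred by lia. apply exp_pos. }
  apply olt_ole_trans with (oadd (osum_upto L nu i) Q).
  - apply osum_upto_lt_add; auto; [lia|].
    destruct Hcase as [Hall|[k0 [Hk0 [Hnk0 [Hzero Hab]]]]].
    + intros l Hl Hnl. exfalso.
      eapply le_not_lt; [apply (proj1 (Hall l ltac:(lia)))| exact Hnl].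
    + intros l Hl. apply (lx_terms_lt N nu xi i k0 k1); auto; lia.
  - eapply ole_trans; [apply add_mono_l, (proj1 (osum_upto_oeq L nu xi i Hpre))|].
    apply osum_upto_add_term_le; auto; lia.
Qed.

End Comparison.

Theorem proposition2p15 (N : nat) (K : Ord) (nu xi : nat -> Ord) :
  3 <= N ->
  infinite_cardinal K ->
  (forall i, 2 <= i <= N - 1 -> olt (nu i) (eps (osucc (osucc K)))) ->
  (forall i, 2 <= i <= N - 1 -> olt (xi i) (eps (osucc (osucc K)))) ->
  irreducible (Lam K) N nu ->
  irreducible (Lam K) N xi ->
  lx (Lam K) N nu xi ->
  olt (o (Lam K) N nu) (o (Lam K) N xi).
Proof.
  intros _ _ _ _ Irr _ Hlx.
  apply o_lt_of_lx; auto using one_lt_Lam, add_principal_Lam.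
Qed.
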